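(* Let $\epsilon>0$, $r>0$, $r_1=(1+\epsilon)r$, let $\alpha$ be a real number with $0<\alpha<1$, and let $N$ be an integer with $N>\frac{5}{\alpha^2\epsilon}$. Then there exist $N$ open subsets $W_1,\dots,W_N$ of $\Delta_{r_1}$ such that $\mathrm{diam}_{r_1}(W_i)\le\alpha$ for every $i$ and $\Delta_r\subset\bigcup_{i=1}^NW_i$.
   Context: $\Delta_\rho$ is the open disk in $\mathbf C$ centered at $0$ of radius $\rho$. On $\Delta_{r_1}$, $d_{r_1}(z,w)=\left|\frac{r_1(z-w)}{r_1^2-z\overline w}\right|$ (a distance), and for $W\subset\Delta_{r_1}$, $\mathrm{diam}_{r_1}(W)=\sup\{d_{r_1}(z,w):z,w\in W\}$. *)

From Stdlib Require Import Reals.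
From Coquelicot Require Import Coquelicot.
Open Scope R_scope.

Definition disk (rho : R) : C -> Prop := fun z => Cmod z < rho.

Definition dist_r (r1 : R) (z w : C) : R :=
  Cmod ((RtoC r1 * (z - w)) / (RtoC (r1 ^ 2) - z * Cconj w))%C.

Definition diam_r (r1 : R) (W : C -> Prop) : Rbar :=
  Lub_Rbar (fun x => exists z w, W z /\ W w /\ x = dist_r r1 z w).

(* Put s = |z|/r1 and P = (1 + s)/(1 - s), so that ln P is the hyperbolic distance from 0.
   Since |r1^2 - z conj w|^2 = r1^2 |z - w|^2 + (r1^2 - |z|^2)(r1^2 - |w|^2), for
   alpha = tanh (ln T) one has d(z, w) <= alpha as soon as
   |z - w|^2 <= r1^2 sinh (ln T)^2 (1 - s^2)(1 - t^2).
   This holds on the disk P < T, and on every sector where P ranges over (a, T a) and the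
   argument over an arc of length about 2 pi / m, once m is a constant times
   sinh (ln (T a)) / sinh (ln T).  The region T <= P < 1 + 2/eps, which contains Delta_r,
   is cut into geometric layers of ratio slightly below T (so that they overlap and the open
   sectors cover).  The number of sectors in a layer is proportional to its outer value of P,
   so the total count is a geometric sum of order 1 + 2/eps, at most 5 / (alpha^2 eps). *)

From Stdlib Require Import Reals Lra Lia Psatz ZArith.
From Coquelicot Require Import Coquelicot.
Open Scope R_scope.

(** * The pseudo-hyperbolic distance *)

(* [tanh_ln T = tanh (ln T)] and [sinh_ln T = sinh (ln T)]. *)
Definition tanh_ln (T : R) : R := (T ^ 2 - 1) / (T ^ 2 + 1).
Definition sinh_ln (T : R) : R := (T ^ 2 - 1) / (2 * T).

Lemma sinh_ln_gt0 (T : R) : 1 < T -> 0 < sinh_ln T.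
Proof. intros HT; unfold sinh_ln; apply Rdiv_lt_0_compat; nra. Qed.

Lemma Cmod_sqr (z : C) : Cmod z ^ 2 = fst z ^ 2 + snd z ^ 2.
Proof. rewrite Cmod2_alt; reflexivity. Qed.

Lemma Cmod_sqr_sub_mul_conj (c : R) (z w : C) :
  Cmod (RtoC c - z * Cconj w) ^ 2
  = c * Cmod (z - w) ^ 2 + (c - Cmod z ^ 2) * (c - Cmod w ^ 2).
Proof. rewrite !Cmod_sqr; destruct z as [a b], w as [a' b']; simpl; ring. Qed.

Lemma dist_r_le_tanh_ln (r1 T : R) (z w : C) :
  0 < r1 -> 1 < T -> Cmod z < r1 -> Cmod w < r1 ->
  Cmod (z - w) ^ 2
    <= r1 ^ 2 * (sinh_ln T ^ 2 * ((1 - (Cmod z / r1) ^ 2) * (1 - (Cmod w / r1) ^ 2))) ->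
  dist_r r1 z w <= tanh_ln T.
Proof.
  intros Hr1 HT Hz Hw Hzw.
  assert (Hz0 := Cmod_ge_0 z); assert (Hw0 := Cmod_ge_0 w).
  assert (Hd0 := Cmod_ge_0 (z - w)).
  set (Y := (r1 ^ 2 - Cmod z ^ 2) * (r1 ^ 2 - Cmod w ^ 2)).
  assert (HY : 0 < Y) by (apply Rmult_lt_0_compat; nra).
  set (den := (RtoC (r1 ^ 2) - z * Cconj w)%C).
  assert (Hden : Cmod den ^ 2 = r1 ^ 2 * Cmod (z - w) ^ 2 + Y)
    by apply Cmod_sqr_sub_mul_conj.
  assert (Hden0 : 0 < Cmod den).
  { assert (H := Cmod_ge_0 den).
    destruct H as [H | H]; [exact H | rewrite <- H in Hden; nra]. }
  assert (Hbound : r1 ^ 2 * Cmod (z - w) ^ 2 <= sinh_ln T ^ 2 * Y).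
  { replace (sinh_ln T ^ 2 * Y) with
      (r1 ^ 2 * (r1 ^ 2 * (sinh_ln T ^ 2 * ((1 - (Cmod z / r1) ^ 2) * (1 - (Cmod w / r1) ^ 2)))))
      by (unfold Y; field; lra).
    apply Rmult_le_compat_l; nra. }
  assert (H4 : 4 * T ^ 2 * (r1 ^ 2 * Cmod (z - w) ^ 2) <= (T ^ 2 - 1) ^ 2 * Y).
  { replace ((T ^ 2 - 1) ^ 2 * Y) with (4 * T ^ 2 * (sinh_ln T ^ 2 * Y))
      by (unfold sinh_ln; field; lra).
    apply Rmult_le_compat_l; nra. }
  assert (Hsq : (r1 * Cmod (z - w)) ^ 2 <= (tanh_ln T * Cmod den) ^ 2).
  { rewrite !Rpow_mult_distr, Hden; unfold tanh_ln.
    apply Rmult_le_reg_r with ((T ^ 2 + 1) ^ 2); [nra |].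
    replace (((T ^ 2 - 1) / (T ^ 2 + 1)) ^ 2 * (r1 ^ 2 * Cmod (z - w) ^ 2 + Y) * (T ^ 2 + 1) ^ 2)
      with ((T ^ 2 - 1) ^ 2 * (r1 ^ 2 * Cmod (z - w) ^ 2 + Y)) by (field; nra).
    nra. }
  assert (Ht : 0 < tanh_ln T) by (unfold tanh_ln; apply Rdiv_lt_0_compat; nra).
  unfold dist_r; fold den.
  rewrite Cmod_div by (intro E; rewrite E, Cmod_0 in Hden0; lra).
  rewrite Cmod_mult, Cmod_R, Rabs_pos_eq by lra.
  apply Rle_div_l; [lra |].
  assert (0 <= r1 * Cmod (z - w)) by nra.
  assert (0 <= tanh_ln T * Cmod den) by nra.
  nra.
Qed.

Lemma diam_r_le (r1 a : R) (W : C -> Prop) :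
  (forall z w, W z -> W w -> dist_r r1 z w <= a) -> Rbar_le (diam_r r1 W) a.
Proof.
  intros H; unfold diam_r.
  destruct (Lub_Rbar_correct (fun x => exists z w, W z /\ W w /\ x = dist_r r1 z w))
    as [_ Hlub].
  apply Hlub; intros x (z & w & Hz & Hw & ->); exact (H z w Hz Hw).
Qed.

(** * Radial and angular estimates *)

(* [ratio_radius P] is the radius [s] with [(1 + s) / (1 - s) = P]. *)
Definition ratio_radius (P : R) : R := (P - 1) / (P + 1).

Lemma ratio_radius_mul (P : R) : 0 < P + 1 -> ratio_radius P * (P + 1) = P - 1.
Proof. intros HP; unfold ratio_radius; field; lra. Qed.

Lemma lt_ratio_radius (P s : R) :
  0 < P + 1 -> s < ratio_radius P <-> 1 + s < P * (1 - s).
Proof.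
  intros HP; split; intros H.
  - apply (Rmult_lt_compat_r (P + 1)) in H; [| lra].
    rewrite ratio_radius_mul in H; lra.
  - apply (Rmult_lt_reg_r (P + 1)); [lra |].
    rewrite ratio_radius_mul; lra.
Qed.

Lemma ratio_radius_lt (P s : R) :
  0 < P + 1 -> ratio_radius P < s <-> P * (1 - s) < 1 + s.
Proof.
  intros HP; split; intros H.
  - apply (Rmult_lt_compat_r (P + 1)) in H; [| lra].
    rewrite ratio_radius_mul in H; lra.
  - apply (Rmult_lt_reg_r (P + 1)); [lra |].
    rewrite ratio_radius_mul; lra.
Qed.

Lemma ratio_radius_lt1 (P : R) : 0 < P + 1 -> ratio_radius P < 1.
Proof. intros HP; apply (ratio_radius_lt P 1); lra. Qed.

Lemma ratio_radius_gt0 (P : R) : 1 < P -> 0 < ratio_radius P.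
Proof. intros HP; apply (lt_ratio_radius P 0); lra. Qed.

Lemma radial_bound (T a s t : R) :
  0 < a -> 1 <= T ->
  a * (1 - s) < 1 + s -> 1 + s < T * a * (1 - s) ->
  a * (1 - t) < 1 + t -> 1 + t < T * a * (1 - t) ->
  4 * T * (s - t) ^ 2 <= (T - 1) ^ 2 * ((1 - s ^ 2) * (1 - t ^ 2)).
Proof.
  intros Ha HT Hs1 Hs2 Ht1 Ht2.
  assert (Hta : 0 <= T * a - a) by nra.
  assert (Hs : s < 1) by nra. assert (Ht : t < 1) by nra.
  set (A := (1 + s) * (1 - t)); set (B := (1 + t) * (1 - s)).
  assert (HA : B < T * A).
  { apply Rlt_trans with (T * a * (1 - t) * (1 - s)); unfold A, B.
    - apply Rmult_lt_compat_r; lra.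
    - replace (T * a * (1 - t) * (1 - s)) with (T * (1 - t) * (a * (1 - s))) by ring.
      replace (T * ((1 + s) * (1 - t))) with (T * (1 - t) * (1 + s)) by ring.
      apply Rmult_lt_compat_l; nra. }
  assert (HB : A < T * B).
  { apply Rlt_trans with (T * a * (1 - s) * (1 - t)); unfold A, B.
    - apply Rmult_lt_compat_r; lra.
    - replace (T * a * (1 - s) * (1 - t)) with (T * (1 - s) * (a * (1 - t))) by ring.
      replace (T * ((1 + t) * (1 - s))) with (T * (1 - s) * (1 + t)) by ring.
      apply Rmult_lt_compat_l; nra. }
  replace ((T - 1) ^ 2 * ((1 - s ^ 2) * (1 - t ^ 2)))
    with (4 * T * (s - t) ^ 2 + (T * A - B) * (T * B - A)) by (unfold A, B; ring).
  nra.
Qed.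

Lemma radius_le_sinh_ln (U s : R) :
  1 <= U -> 0 <= s -> 1 + s <= U * (1 - s) -> 2 * s <= sinh_ln U * (1 - s ^ 2).
Proof.
  intros HU Hs H.
  apply Rmult_le_reg_l with (2 * U); [lra |].
  replace (2 * U * (sinh_ln U * (1 - s ^ 2))) with ((U ^ 2 - 1) * (1 - s ^ 2))
    by (unfold sinh_ln; field; lra).
  replace ((U ^ 2 - 1) * (1 - s ^ 2)) with
    (2 * U * (2 * s) + ((U - 1) - (U + 1) * s) * ((U - 1) * s + (U + 1))) by ring.
  assert (0 <= (U - 1) - (U + 1) * s) by lra.
  assert (0 <= (U - 1) * s + (U + 1)) by nra.
  assert (0 <= ((U - 1) - (U + 1) * s) * ((U - 1) * s + (U + 1))) by (apply Rmult_le_pos; lra).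
  lra.
Qed.

(* The radial term uses at most a quarter of the budget [sinh_ln T ^ 2], the angular one
   [(32/37)^2 < 3/4] of it. *)
Lemma sector_estimate (T a s t eta sigma : R) :
  1 < T -> 0 < a -> 0 <= s -> 0 <= t ->
  a * (1 - s) < 1 + s -> 1 + s < T * a * (1 - s) ->
  a * (1 - t) < 1 + t -> 1 + t < T * a * (1 - t) ->
  2 * s <= sigma * (1 - s ^ 2) -> 2 * t <= sigma * (1 - t ^ 2) ->
  0 <= eta -> 0 <= sigma -> eta * sigma <= 32 / 37 * sinh_ln T ->
  (s - t) ^ 2 + (2 * eta) ^ 2 * (s * t)
    <= sinh_ln T ^ 2 * ((1 - s ^ 2) * (1 - t ^ 2)).
Proof.
  intros HT Ha Hs Ht Hs1 Hs2 Ht1 Ht2 Hss Hts Heta Hsigma Hes.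
  assert (Hrad := radial_bound T a s t Ha ltac:(lra) Hs1 Hs2 Ht1 Ht2).
  assert (Hta : 0 <= T * a - a) by nra.
  assert (Hs' : s < 1) by nra. assert (Ht' : t < 1) by nra.
  set (Y := (1 - s ^ 2) * (1 - t ^ 2)) in *.
  assert (HY : 0 < Y) by (unfold Y; apply Rmult_lt_0_compat; nra).
  assert (Hbeta : (T - 1) ^ 2 <= T * sinh_ln T ^ 2).
  { replace (T * sinh_ln T ^ 2) with ((T - 1) ^ 2 * ((T + 1) ^ 2 / (4 * T)))
      by (unfold sinh_ln; field; lra).
    assert (1 <= (T + 1) ^ 2 / (4 * T)).
    { apply Rmult_le_reg_r with (4 * T); [lra |].
      replace ((T + 1) ^ 2 / (4 * T) * (4 * T)) with ((T + 1) ^ 2) by (field; lra).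
      nra. }
    rewrite <- (Rmult_1_r ((T - 1) ^ 2)) at 1.
    apply Rmult_le_compat_l; [apply pow2_ge_0 | assumption]. }
  assert (Hradial : (s - t) ^ 2 <= sinh_ln T ^ 2 * Y / 4).
  { apply Rmult_le_reg_l with (4 * T); [lra |].
    replace (4 * T * (sinh_ln T ^ 2 * Y / 4)) with (T * sinh_ln T ^ 2 * Y) by field.
    apply Rle_trans with ((T - 1) ^ 2 * Y); [exact Hrad |].
    apply Rmult_le_compat_r; lra. }
  assert (Hangular : (2 * eta) ^ 2 * (s * t) <= (32 / 37 * sinh_ln T) ^ 2 * Y).
  { apply Rle_trans with ((eta * sigma) ^ 2 * Y).
    - replace ((eta * sigma) ^ 2 * Y) with
        (eta ^ 2 * ((sigma * (1 - s ^ 2)) * (sigma * (1 - t ^ 2)))) by (unfold Y; ring).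
      replace ((2 * eta) ^ 2 * (s * t)) with (eta ^ 2 * ((2 * s) * (2 * t))) by ring.
      apply Rmult_le_compat_l; [nra |].
      apply Rmult_le_compat; lra.
    - apply Rmult_le_compat_r; [lra |].
      apply pow_incr; split; [nra | exact Hes]. }
  assert (0 <= sinh_ln T ^ 2 * Y) by (apply Rmult_le_pos; [apply pow2_ge_0 | lra]).
  lra.
Qed.

Lemma central_estimate (T s t : R) :
  1 < T -> 0 <= s -> 0 <= t -> s < ratio_radius T -> t < ratio_radius T ->
  (s + t) ^ 2 <= sinh_ln T ^ 2 * ((1 - s ^ 2) * (1 - t ^ 2)).
Proof.
  intros HT Hs Ht HsT HtT.
  set (h := ratio_radius T) in *.
  assert (Hh1 : h < 1) by (apply ratio_radius_lt1; lra).
  (* The bound is attained at [s = t = h]. *)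
  assert (Hbh : sinh_ln T * (1 - h ^ 2) = 2 * h)
    by (unfold h, ratio_radius, sinh_ln; field; lra).
  assert (Hprod : (1 - h ^ 2) ^ 2 <= (1 - s ^ 2) * (1 - t ^ 2))
    by (replace ((1 - h ^ 2) ^ 2) with ((1 - h ^ 2) * (1 - h ^ 2)) by ring;
        apply Rmult_le_compat; nra).
  apply Rle_trans with ((2 * h) ^ 2); [nra |].
  rewrite <- Hbh, Rpow_mult_distr.
  apply Rmult_le_compat_l; [apply pow2_ge_0 | exact Hprod].
Qed.

Lemma chord_sqr_le (z w u : C) (eta : R) :
  0 < Cmod z -> 0 < Cmod w ->
  Cmod (z - Cmod z * u) < eta * Cmod z -> Cmod (w - Cmod w * u) < eta * Cmod w ->
  Cmod (z - w) ^ 2 <= (Cmod z - Cmod w) ^ 2 + (2 * eta) ^ 2 * (Cmod z * Cmod w).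
Proof.
  intros Hs Ht Hz Hw.
  set (s := Cmod z) in *; set (t := Cmod w) in *.
  assert (Ez : fst z ^ 2 + snd z ^ 2 - s ^ 2 = 0) by (unfold s; rewrite Cmod_sqr; ring).
  assert (Ew : fst w ^ 2 + snd w ^ 2 - t ^ 2 = 0) by (unfold t; rewrite Cmod_sqr; ring).
  assert (Hid : s * t * Cmod (z - w) ^ 2 = s * t * (s - t) ^ 2 + Cmod (t * z - s * w) ^ 2).
  { transitivity (s * t * (s - t) ^ 2 + Cmod (t * z - s * w) ^ 2
      + (s * t - t ^ 2) * (fst z ^ 2 + snd z ^ 2 - s ^ 2)
      + (s * t - s ^ 2) * (fst w ^ 2 + snd w ^ 2 - t ^ 2)).
    - rewrite !Cmod_sqr; destruct z as [a b], w as [c d]; simpl; ring.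
    - rewrite Ez, Ew; ring. }
  assert (Hcross : Cmod (t * z - s * w) <= 2 * eta * (s * t)).
  { replace (t * z - s * w)%C with (t * (z - s * u) + - (s * (w - t * u)))%C by ring.
    eapply Rle_trans; [apply Cmod_triangle |].
    rewrite Cmod_opp, !Cmod_mult, !Cmod_R, !Rabs_pos_eq by lra.
    nra. }
  assert (Hc0 := Cmod_ge_0 (t * z - s * w)).
  apply Rmult_le_reg_l with (s * t); [nra |].
  rewrite Hid; nra.
Qed.

(** * Sectors *)

Lemma Rabs_Cmod_sub_le (a b : C) : Rabs (Cmod a - Cmod b) <= Cmod (a - b).
Proof.
  apply Rabs_le.
  assert (H1 := Cmod_triangle (a - b) b); assert (H2 := Cmod_triangle (b - a) a).
  replace (a - b + b)%C with a in H1 by ring; replace (b - a + a)%C with b in H2 by ring.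
  replace (b - a)%C with (- (a - b))%C in H2 by ring; rewrite Cmod_opp in H2.
  lra.
Qed.

Lemma open_lt0_of_lipschitz (f : C -> R) (L : R) :
  0 < L -> (forall x y, Rabs (f y - f x) <= L * Cmod (y - x)) -> open (fun z => f z < 0).
Proof.
  intros HL Hf z Hz.
  assert (He : 0 < - f z / (2 * L)) by (apply Rdiv_lt_0_compat; lra).
  exists (mkposreal _ He); intros y Hy.
  (* Balls of [C] are product balls, inside Euclidean balls of [sqrt 2] times the radius. *)
  assert (Hyz := C_NormedModule_mixin_compat2 z y (mkposreal _ He) Hy).
  change (Cmod (y - z) < sqrt 2 * (- f z / (2 * L))) in Hyz.
  assert (Hsqrt2 : sqrt 2 < 2).
  { assert (H0 := sqrt_pos 2); assert (H2 := sqrt_sqrt 2 ltac:(lra)); nra. }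
  assert (Hdist : L * Cmod (y - z) < - f z).
  { replace (- f z) with (L * (2 * (- f z / (2 * L)))) by (field; lra).
    apply Rmult_lt_compat_l; [exact HL |].
    apply Rlt_le_trans with (sqrt 2 * (- f z / (2 * L))); [exact Hyz |].
    apply Rmult_le_compat_r; lra. }
  specialize (Hf z y); apply Rabs_le_between in Hf.
  lra.
Qed.

Lemma open_Cmod_lt (c : R) : open (fun z : C => Cmod z < c).
Proof.
  apply (open_ext (fun z => Cmod z - c < 0)); [intros; lra |].
  apply (open_lt0_of_lipschitz _ 1); [lra |]; intros x y.
  replace (Cmod y - c - (Cmod x - c)) with (Cmod y - Cmod x) by ring.
  rewrite Rmult_1_l; apply Rabs_Cmod_sub_le.
Qed.

Lemma open_Cmod_gt (c : R) : open (fun z : C => c < Cmod z).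
Proof.
  apply (open_ext (fun z => c - Cmod z < 0)); [intros; lra |].
  apply (open_lt0_of_lipschitz _ 1); [lra |]; intros x y.
  replace (c - Cmod y - (c - Cmod x)) with (- (Cmod y - Cmod x)) by ring.
  rewrite Rabs_Ropp, Rmult_1_l; apply Rabs_Cmod_sub_le.
Qed.

Lemma open_angle_lt (u : C) (eta : R) :
  open (fun z : C => Cmod (z - Cmod z * u) < eta * Cmod z).
Proof.
  apply (open_ext (fun z => Cmod (z - Cmod z * u) - eta * Cmod z < 0)); [intros; lra |].
  assert (Hu := Cmod_ge_0 u); assert (He := Rabs_pos eta).
  apply (open_lt0_of_lipschitz _ (1 + Cmod u + Rabs eta)); [lra |]; intros x y.
  assert (Hxy := Rabs_Cmod_sub_le y x).
  assert (Hmod : Rabs (Cmod (y - Cmod y * u) - Cmod (x - Cmod x * u))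
                 <= Cmod (y - x) + Cmod (y - x) * Cmod u).
  { eapply Rle_trans; [apply Rabs_Cmod_sub_le |].
    replace (y - Cmod y * u - (x - Cmod x * u))%C
      with ((y - x) + RtoC (- (Cmod y - Cmod x)) * u)%C
      by (rewrite RtoC_opp, RtoC_minus; ring).
    eapply Rle_trans; [apply Cmod_triangle |].
    rewrite Cmod_mult, Cmod_R, Rabs_Ropp.
    apply Rplus_le_compat_l, Rmult_le_compat_r; assumption. }
  assert (Heta : Rabs (eta * (Cmod y - Cmod x)) <= Rabs eta * Cmod (y - x))
    by (rewrite Rabs_mult; apply Rmult_le_compat_l; assumption).
  replace (Cmod (y - Cmod y * u) - eta * Cmod y - (Cmod (x - Cmod x * u) - eta * Cmod x))
    with ((Cmod (y - Cmod y * u) - Cmod (x - Cmod x * u)) - eta * (Cmod y - Cmod x)) by ring.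
  unfold Rminus at 1; eapply Rle_trans; [apply Rabs_triang |].
  rewrite Rabs_Ropp.
  nra.
Qed.

Definition root_of_unity (m j : nat) : C :=
  (cos (2 * PI * INR j / INR m), sin (2 * PI * INR j / INR m)).

Lemma PI_lt_16_5 : PI < 16 / 5.
Proof.
  destruct (PI_2_3_7_ineq 1) as [_ H].
  unfold tg_alt, PI_2_3_7_tg, Ratan_seq in H; simpl in H.
  field_simplify in H; lra.
Qed.

Lemma cos_ge_1_sub_sqr_half (d : R) : - (PI / 2) <= d <= PI / 2 -> 1 - d ^ 2 / 2 <= cos d.
Proof.
  intros [H1 H2]; destruct (cos_bound d 0 ltac:(lra) H2) as [H _].
  unfold cos_approx, cos_term in H; simpl in H.
  field_simplify in H; lra.
Qed.

Lemma unit_polar (x y : R) :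
  x ^ 2 + y ^ 2 = 1 -> exists phi, 0 <= phi <= 2 * PI /\ cos phi = x /\ sin phi = y.
Proof.
  intros H.
  assert (Hx : -1 <= x <= 1) by nra.
  assert (Hs : sin (acos x) = Rabs y).
  { rewrite sin_acos by lra; rewrite <- sqrt_Rsqr_abs; f_equal; unfold Rsqr; nra. }
  assert (Hc : cos (acos x) = x) by (apply cos_acos; lra).
  destruct (acos_bound x) as [b1 b2].
  destruct (Rle_dec 0 y) as [Hy | Hy].
  - exists (acos x); rewrite Rabs_pos_eq in Hs by lra.
    assert (0 < PI) by apply PI_RGT_0; repeat split; lra.
  - exists (2 * PI - acos x); rewrite Rabs_left in Hs by lra.
    rewrite cos_minus, sin_minus, cos_2PI, sin_2PI, Hc, Hs.
    repeat split; lra.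
Qed.

Lemma exists_nearest_nat (x : R) (m : nat) :
  0 <= x <= INR m -> exists k, (k <= m)%nat /\ Rabs (x - INR k) <= / 2.
Proof.
  intros Hx.
  destruct (archimed (x - / 2)) as [Hk1 Hk2].
  assert (Hk0 : (0 <= up (x - / 2))%Z).
  { assert (H : IZR (-1) < IZR (up (x - / 2))) by (simpl; lra); apply lt_IZR in H; lia. }
  exists (Z.to_nat (up (x - / 2))).
  rewrite INR_IZR_INZ, Z2Nat.id by exact Hk0.
  split; [| apply Rabs_le; lra].
  assert (H : IZR (up (x - / 2)) < IZR (Z.of_nat m + 1))
    by (rewrite plus_IZR, <- INR_IZR_INZ; simpl; lra).
  apply lt_IZR in H; lia.
Qed.

(* The nearest grid angle may be [2 * PI], which represents the root of index 0. *)
Lemma grid_angle_near (m : nat) (phi : R) :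
  (1 <= m)%nat -> 0 <= phi <= 2 * PI ->
  exists j, (j < m)%nat /\ exists psi,
    cos psi = cos (2 * PI * INR j / INR m) /\ sin psi = sin (2 * PI * INR j / INR m) /\
    Rabs (phi - psi) <= PI / INR m.
Proof.
  intros Hm Hphi.
  assert (HPI := PI_RGT_0).
  assert (Hm0 : 0 < INR m) by (apply lt_0_INR; lia).
  destruct (exists_nearest_nat (phi * INR m / (2 * PI)) m) as (k & Hkm & Hk).
  { split; [apply Rdiv_le_0_compat; nra | apply Rle_div_l; nra]. }
  assert (Hnear : Rabs (phi - 2 * PI * INR k / INR m) <= PI / INR m).
  { replace (phi - 2 * PI * INR k / INR m)
      with (2 * PI / INR m * (phi * INR m / (2 * PI) - INR k)) by (field; lra).
    rewrite Rabs_mult, Rabs_pos_eq by (apply Rlt_le, Rdiv_lt_0_compat; lra).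
    replace (PI / INR m) with (2 * PI / INR m * / 2) by (field; lra).
    apply Rmult_le_compat_l; [apply Rlt_le, Rdiv_lt_0_compat; lra | exact Hk]. }
  destruct (Nat.eq_dec k m) as [-> | Hkm'].
  - exists 0%nat; split; [lia |].
    exists (2 * PI * INR m / INR m).
    replace (2 * PI * INR m / INR m) with (2 * PI) in * by (field; lra).
    replace (2 * PI * INR 0 / INR m) with 0 by (simpl; field; lra).
    rewrite cos_2PI, cos_0, sin_2PI, sin_0; auto.
  - exists k; split; [lia |].
    exists (2 * PI * INR k / INR m); auto.
Qed.

Lemma two_sub_two_cos_lt (m : nat) (d : R) :
  (1 <= m)%nat -> Rabs d <= PI / INR m -> 2 - 2 * cos d < (16 / (5 * INR m)) ^ 2.
Proof.
  intros Hm Hd.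
  assert (HPI := PI_lt_16_5); assert (HPI0 := PI_RGT_0).
  destruct (Nat.eq_dec m 1) as [-> | Hm2].
  - assert (H := COS_bound d); simpl; lra.
  - assert (Hm2' : 2 <= INR m)
      by (replace 2 with (INR 2) by (simpl; lra); apply le_INR; lia).
    assert (Hb : PI / INR m <= PI / 2)
      by (apply Rmult_le_compat_l; [lra | apply Rinv_le_contravar; lra]).
    assert (Hcos := cos_ge_1_sub_sqr_half d ltac:(apply Rabs_le_between; lra)).
    assert (Hpos : 0 <= PI / INR m) by (apply Rdiv_le_0_compat; lra).
    assert (Hsq : d ^ 2 <= (PI / INR m) ^ 2)
      by (rewrite <- (pow2_abs d); apply pow_incr; split; [apply Rabs_pos | exact Hd]).
    assert (Hlt : PI / INR m < 16 / (5 * INR m)).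
    { replace (16 / (5 * INR m)) with (16 / 5 / INR m) by (field; lra).
      apply Rmult_lt_compat_r; [apply Rinv_0_lt_compat |]; lra. }
    assert ((PI / INR m) ^ 2 < (16 / (5 * INR m)) ^ 2) by nra.
    lra.
Qed.

Lemma exists_root_of_unity_near (m : nat) (z : C) :
  (1 <= m)%nat -> 0 < Cmod z ->
  exists j, (j < m)%nat /\
    Cmod (z - Cmod z * root_of_unity m j) < 16 / (5 * INR m) * Cmod z.
Proof.
  intros Hm Hz.
  set (a := Cmod z) in *.
  assert (Hunit : (fst z / a) ^ 2 + (snd z / a) ^ 2 = 1).
  { replace ((fst z / a) ^ 2 + (snd z / a) ^ 2) with (Cmod z ^ 2 / a ^ 2)
      by (rewrite Cmod_sqr; field; lra).
    fold a; field; lra. }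
  destruct (unit_polar _ _ Hunit) as (phi & Hphi & Hc & Hs).
  destruct (grid_angle_near m phi Hm Hphi) as (j & Hj & psi & Hcpsi & Hspsi & Hnear).
  exists j; split; [exact Hj |].
  assert (Hsq : Cmod (z - a * root_of_unity m j) ^ 2 = a ^ 2 * (2 - 2 * cos (phi - psi))).
  { rewrite cos_minus, Cmod_sqr; unfold root_of_unity; simpl.
    rewrite <- Hcpsi, <- Hspsi.
    replace (fst z) with (a * cos phi) by (rewrite Hc; field; lra).
    replace (snd z) with (a * sin phi) by (rewrite Hs; field; lra).
    assert (Hpsi := sin2_cos2 psi); assert (Hphi1 := sin2_cos2 phi); unfold Rsqr in *.
    transitivity (a ^ 2 * ((sin phi * sin phi + cos phi * cos phi)
      + (sin psi * sin psi + cos psi * cos psi) - 2 * (cos phi * cos psi + sin phi * sin psi))).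
    - ring.
    - rewrite Hphi1, Hpsi; ring. }
  assert (Hlt := two_sub_two_cos_lt m (phi - psi) Hm Hnear).
  assert (Hm0 : 0 < INR m) by (apply lt_0_INR; lia).
  assert (Hb : 0 < 16 / (5 * INR m) * a)
    by (apply Rmult_lt_0_compat; [apply Rdiv_lt_0_compat |]; lra).
  assert (H0 := Cmod_ge_0 (z - a * root_of_unity m j)).
  assert (Cmod (z - a * root_of_unity m j) ^ 2 < (16 / (5 * INR m) * a) ^ 2).
  { rewrite Hsq, Rpow_mult_distr, Rmult_comm.
    apply Rmult_lt_compat_r; [nra | exact Hlt]. }
  nra.
Qed.

Definition admissible (r1 alpha : R) (U : C -> Prop) : Prop :=
  open U /\ (forall z, U z -> disk r1 z) /\ Rbar_le (diam_r r1 U) alpha.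

(* [16 / 5 > PI]: the arcs around the [m]-th roots of unity cover the circle. *)
Definition sector (r1 a b : R) (m j : nat) (z : C) : Prop :=
  r1 * ratio_radius a < Cmod z /\ Cmod z < r1 * ratio_radius b /\
  Cmod (z - Cmod z * root_of_unity m j) < 16 / (5 * INR m) * Cmod z.

Lemma central_admissible (r1 T : R) :
  0 < r1 -> 1 < T -> admissible r1 (tanh_ln T) (disk (r1 * ratio_radius T)).
Proof.
  intros Hr1 HT; unfold disk.
  assert (Hh := ratio_radius_lt1 T ltac:(lra)).
  assert (Hin : forall z, Cmod z < r1 * ratio_radius T -> Cmod z < r1) by (intros; nra).
  split; [apply open_Cmod_lt | split; [exact Hin |]].
  apply diam_r_le; intros z w Hz Hw.
  assert (Hz0 := Cmod_ge_0 z); assert (Hw0 := Cmod_ge_0 w).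
  apply dist_r_le_tanh_ln; auto.
  apply Rle_trans with (r1 ^ 2 * (Cmod z / r1 + Cmod w / r1) ^ 2).
  - replace (r1 ^ 2 * (Cmod z / r1 + Cmod w / r1) ^ 2) with ((Cmod z + Cmod w) ^ 2)
      by (field; lra).
    assert (Ht := Cmod_triangle z (- w)); rewrite Cmod_opp in Ht.
    assert (H0 := Cmod_ge_0 (z - w)).
    apply pow_incr; split; [exact H0 | exact Ht].
  - apply Rmult_le_compat_l; [nra |].
    apply central_estimate; auto;
      solve [apply Rdiv_le_0_compat; lra | apply (Rlt_div_l (Cmod _)); lra].
Qed.

Lemma sector_dist_le (r1 T a : R) (m j : nat) (z w : C) :
  0 < r1 -> 1 < T -> 1 < a -> 37 / 10 * sinh_ln (T * a) / sinh_ln T <= INR m ->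
  sector r1 a (T * a) m j z -> sector r1 a (T * a) m j w -> dist_r r1 z w <= tanh_ln T.
Proof.
  intros Hr1 HT Ha Hm (Hz1 & Hz2 & Hz3) (Hw1 & Hw2 & Hw3).
  assert (Hbeta := sinh_ln_gt0 T HT).
  assert (Hsigma := sinh_ln_gt0 (T * a) ltac:(nra)).
  assert (Hm0 : 0 < INR m).
  { eapply Rlt_le_trans; [| exact Hm].
    apply Rdiv_lt_0_compat; lra. }
  assert (Hlo := ratio_radius_gt0 a Ha).
  assert (Hhi := ratio_radius_lt1 (T * a) ltac:(nra)).
  set (s := Cmod z / r1); set (t := Cmod w / r1).
  assert (Hs : ratio_radius a < s < ratio_radius (T * a))
    by (unfold s; split; [apply (Rlt_div_r (ratio_radius a)) | apply (Rlt_div_l (Cmod z))]; lra).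
  assert (Ht : ratio_radius a < t < ratio_radius (T * a))
    by (unfold t; split; [apply (Rlt_div_r (ratio_radius a)) | apply (Rlt_div_l (Cmod w))]; lra).
  set (eta := 16 / (5 * INR m)) in *; set (sigma := sinh_ln (T * a)) in *.
  assert (Heta : 0 <= eta) by (unfold eta; apply Rlt_le, Rdiv_lt_0_compat; lra).
  apply dist_r_le_tanh_ln; [exact Hr1 | exact HT | nra | nra |].
  apply Rle_trans with (r1 ^ 2 * ((s - t) ^ 2 + (2 * eta) ^ 2 * (s * t))).
  - replace (r1 ^ 2 * ((s - t) ^ 2 + (2 * eta) ^ 2 * (s * t)))
      with ((Cmod z - Cmod w) ^ 2 + (2 * eta) ^ 2 * (Cmod z * Cmod w))
      by (unfold s, t; field; lra).
    apply (chord_sqr_le z w (root_of_unity m j) eta); auto; nra.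
  - apply Rmult_le_compat_l; [nra |].
    apply (sector_estimate T a s t eta sigma); try lra.
    + apply ratio_radius_lt; lra.
    + apply lt_ratio_radius; nra.
    + apply ratio_radius_lt; lra.
    + apply lt_ratio_radius; nra.
    + apply radius_le_sinh_ln; [nra | lra | apply Rlt_le, lt_ratio_radius; nra].
    + apply radius_le_sinh_ln; [nra | lra | apply Rlt_le, lt_ratio_radius; nra].
    + unfold eta.
      replace (16 / (5 * INR m) * sigma)
        with (32 / 37 * sinh_ln T * (37 / 10 * sigma / sinh_ln T / INR m))
        by (field; lra).
      rewrite <- (Rmult_1_r (32 / 37 * sinh_ln T)) at 2.
      apply Rmult_le_compat_l; [lra |].
      apply Rle_div_l; lra.
Qed.

Lemma sector_admissible (r1 T a : R) (m j : nat) :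
  0 < r1 -> 1 < T -> 1 < a -> 37 / 10 * sinh_ln (T * a) / sinh_ln T <= INR m ->
  admissible r1 (tanh_ln T) (sector r1 a (T * a) m j).
Proof.
  intros Hr1 HT Ha Hm; split; [| split].
  - apply open_and; [apply open_Cmod_gt |].
    apply open_and; [apply open_Cmod_lt | apply open_angle_lt].
  - intros z (_ & Hz & _); unfold disk.
    assert (ratio_radius (T * a) < 1) by (apply ratio_radius_lt1; nra).
    nra.
  - apply diam_r_le; intros z w Hz Hw; exact (sector_dist_le r1 T a m j z w Hr1 HT Ha Hm Hz Hw).
Qed.

Lemma sector_cover (r1 a b : R) (m : nat) (z : C) :
  0 < r1 -> 1 < a -> (1 <= m)%nat ->
  r1 * ratio_radius a < Cmod z < r1 * ratio_radius b ->
  exists j, (j < m)%nat /\ sector r1 a b m j z.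
Proof.
  intros Hr1 Ha Hm [Hlo Hhi].
  assert (Hz : 0 < Cmod z) by (assert (H := ratio_radius_gt0 a Ha); nra).
  destruct (exists_root_of_unity_near m z Hm Hz) as (j & Hj & Hang).
  exists j; repeat split; assumption.
Qed.

(** * Layers *)

Fixpoint prefix_sum (m : nat -> nat) (n : nat) : nat :=
  match n with
  | O => O
  | S k => (prefix_sum m k + m k)%nat
  end.

Lemma prefix_sum_le (m : nat -> nat) (n n' : nat) :
  (n <= n')%nat -> (prefix_sum m n <= prefix_sum m n')%nat.
Proof. induction 1; simpl; lia. Qed.

Lemma prefix_sum_block_lt (m : nat -> nat) (K n j : nat) :
  (n < K)%nat -> (j < m n)%nat -> (prefix_sum m n + j < prefix_sum m K)%nat.
Proof. intros Hn Hj; assert (H := prefix_sum_le m (S n) K Hn); simpl in H; lia. Qed.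

Fixpoint block_enum {X : Type} (x0 : X) (F : nat -> nat -> X) (m : nat -> nat) (K i : nat) : X :=
  match K with
  | O => x0
  | S k =>
      if (i <? prefix_sum m k)%nat then block_enum x0 F m k i
      else if (i <? prefix_sum m (S k))%nat then F k (i - prefix_sum m k)%nat
      else x0
  end.

Lemma block_enum_cases {X : Type} (x0 : X) (F : nat -> nat -> X) (m : nat -> nat) (K i : nat) :
  block_enum x0 F m K i = x0 \/
  exists n j, (n < K)%nat /\ (j < m n)%nat /\ block_enum x0 F m K i = F n j.
Proof.
  induction K as [| k IH]; simpl; [now left |].
  destruct (Nat.ltb_spec i (prefix_sum m k)) as [Hi | Hi].
  - destruct IH as [IH | (n & j & Hn & Hj & IH)]; [now left | right].
    exists n, j; repeat split; [lia | assumption | assumption].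
  - destruct (Nat.ltb_spec i (prefix_sum m k + m k)) as [Hi' | Hi']; [right | now left].
    exists k, (i - prefix_sum m k)%nat; repeat split; lia.
Qed.

Lemma block_enum_prefix_sum {X : Type} (x0 : X) (F : nat -> nat -> X) (m : nat -> nat)
    (K n j : nat) :
  (n < K)%nat -> (j < m n)%nat -> block_enum x0 F m K (prefix_sum m n + j) = F n j.
Proof.
  intros Hn Hj; induction K as [| k IH]; [lia |]; simpl.
  destruct (Nat.eq_dec n k) as [-> | Hnk].
  - replace (prefix_sum m k + j <? prefix_sum m k)%nat with false
      by (symmetry; apply Nat.ltb_ge; lia).
    replace (prefix_sum m k + j <? prefix_sum m k + m k)%nat with true
      by (symmetry; apply Nat.ltb_lt; lia).
    f_equal; lia.
  - replace (prefix_sum m n + j <? prefix_sum m k)%nat with true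
      by (symmetry; apply Nat.ltb_lt, prefix_sum_block_lt; lia).
    apply IH; lia.
Qed.

Lemma exists_geometric_start (P q T : R) :
  1 < q -> 0 < T -> 0 < P ->
  exists K : nat, P / q ^ K <= T /\ ((0 < K)%nat -> T / q < P / q ^ K).
Proof.
  intros Hq HT HP.
  destruct (Pow_x_infinity q ltac:(rewrite Rabs_pos_eq; lra) (P / T)) as [n Hn].
  specialize (Hn n (le_n n)); rewrite Rabs_pos_eq in Hn by (apply pow_le; lra).
  assert (Hn' : P <= T * q ^ n).
  { assert (H : P <= q ^ n * T) by (apply Rle_div_l; lra); lra. }
  clear Hn; induction n as [| n IH].
  - exists 0%nat; split; [simpl in *; unfold Rdiv; rewrite Rinv_1; lra | lia].
  - destruct (Rle_dec P (T * q ^ n)) as [h | h]; [exact (IH h) |].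
    exists (S n).
    assert (0 < q ^ n) by (apply pow_lt; lra).
    simpl in *; split.
    + apply Rle_div_l; nra.
    + intros _; apply (Rlt_div_r (T / q)); [nra |].
      replace (T / q * (q * q ^ n)) with (T * q ^ n) by (field; lra); lra.
Qed.

Lemma exists_step_between (B : nat -> R) (x : R) (K : nat) :
  B 0%nat <= x -> x < B K -> exists n, (n < K)%nat /\ B n <= x /\ x < B (S n).
Proof.
  intros H1; induction K as [| K IH]; intros H2; [lra |].
  destruct (Rlt_dec x (B K)) as [h | h].
  - destruct (IH h) as (n & Hn & Hx); exists n; split; [lia | exact Hx].
  - exists K; split; [lia | split; [lra | exact H2]].
Qed.

Lemma prefix_sum_le_telescope (m : nat -> nat) (B : nat -> R) (c : R) (K : nat) :
  (forall n, (n < K)%nat -> INR (m n) <= c * (B (S n) - B n)) ->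
  INR (prefix_sum m K) <= c * (B K - B 0%nat).
Proof.
  intros H; induction K as [| K IH]; simpl; [lra |].
  rewrite plus_INR.
  assert (IH' := IH (fun n Hn => H n ltac:(lia))); assert (HK := H K ltac:(lia)).
  lra.
Qed.

(* Consecutive layers overlap by this factor, so that the open sectors still cover. *)
Definition overlap (T : R) : R := 1 + sinh_ln T / 100.

Lemma overlap_gt1 (T : R) : 1 < T -> 1 < overlap T.
Proof. intros HT; assert (H := sinh_ln_gt0 T HT); unfold overlap; lra. Qed.

Lemma overlap_lt (T : R) : 1 < T -> overlap T < T.
Proof.
  intros HT.
  replace (overlap T) with (T - (T - 1) * (199 * T - 1) / (200 * T))
    by (unfold overlap, sinh_ln; field; lra).
  assert (0 < (T - 1) * (199 * T - 1) / (200 * T)) by (apply Rdiv_lt_0_compat; nra).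
  lra.
Qed.

Lemma layer_constant_bound (T : R) : 1 < T ->
  (37 / 20 * T / sinh_ln T + overlap T) * tanh_ln T ^ 2 <= 5 / 2 * (T - overlap T).
Proof.
  intros HT.
  set (x := T - 1).
  assert (Hx : 0 <= x) by (unfold x; lra).
  set (p := 500 - 30 * x - 328 * x ^ 2 + 1248 * x ^ 3 + 1539 * x ^ 4 + 993 / 2 * x ^ 5).
  assert (Hp : 0 < p).
  { assert (0 <= x * (x - 1 / 8) ^ 2) by (apply Rmult_le_pos; [lra | apply pow2_ge_0]).
    assert (0 <= x ^ 2 * (x - 1 / 8) ^ 2) by (apply Rmult_le_pos; apply pow2_ge_0).
    assert (0 <= x ^ 4) by nra; assert (0 <= x ^ 5) by nra.
    unfold p; nra. }
  assert (HD : 0 < 200 * T * (T ^ 2 + 1) ^ 2) by (apply Rmult_lt_0_compat; nra).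
  apply Rmult_le_reg_r with (200 * T * (T ^ 2 + 1) ^ 2); [exact HD |].
  apply Rminus_le.
  replace ((37 / 20 * T / sinh_ln T + overlap T) * tanh_ln T ^ 2 * (200 * T * (T ^ 2 + 1) ^ 2)
           - 5 / 2 * (T - overlap T) * (200 * T * (T ^ 2 + 1) ^ 2))
    with (- (x * p)) by (unfold p, x, overlap, sinh_ln, tanh_ln; field; nra).
  assert (0 <= x * p) by (apply Rmult_le_pos; lra).
  lra.
Qed.

Lemma ceil_bounds (x : R) : 0 < x ->
  x <= INR (Z.to_nat (up x)) <= x + 1 /\ (1 <= Z.to_nat (up x))%nat.
Proof.
  intros Hx; destruct (archimed x) as [h1 h2].
  assert (Hz : (0 < up x)%Z) by (apply lt_IZR; lra).
  rewrite INR_IZR_INZ, Z2Nat.id by lia.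
  split; [lra | lia].
Qed.

Section Layers.

Variables (eps r1 T : R) (K : nat).
Hypotheses (eps_gt0 : 0 < eps) (r1_gt0 : 0 < r1) (T_gt1 : 1 < T).

Local Notation q := (T / overlap T).

Definition layer (n : nat) : R := (1 + 2 / eps) / q ^ K * q ^ n.

Hypothesis layer0_le : layer 0 <= T.
Hypothesis overlap_lt_layer0 : (0 < K)%nat -> overlap T < layer 0.

Definition layer_sectors (n : nat) : nat :=
  Z.to_nat (up (37 / 10 * sinh_ln (layer (S n)) / sinh_ln T)).

Definition layer_sector (n j : nat) : C -> Prop :=
  sector r1 (layer n / overlap T) (layer (S n)) (layer_sectors n) j.

Lemma layer_ratio_gt1 : 1 < q.
Proof.
  assert (H1 := overlap_gt1 T T_gt1); assert (H2 := overlap_lt T T_gt1).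
  apply (Rlt_div_r 1); lra.
Qed.

Lemma layer_S (n : nat) : layer (S n) = T * (layer n / overlap T).
Proof.
  assert (H := overlap_gt1 T T_gt1).
  assert (Hq := layer_ratio_gt1); assert (HqK : q ^ K <> 0) by (apply pow_nonzero; lra).
  unfold layer; simpl; field; repeat split; lra.
Qed.

Lemma layer_K : layer K = 1 + 2 / eps.
Proof.
  assert (H := layer_ratio_gt1).
  assert (HqK : q ^ K <> 0) by (apply pow_nonzero; lra).
  unfold layer; field; lra.
Qed.

Lemma overlap_lt_layer (n : nat) : (n < K)%nat -> overlap T < layer n.
Proof.
  intros Hn; assert (H0 := overlap_lt_layer0 ltac:(lia)); assert (Hq := layer_ratio_gt1).
  assert (Hqn : 1 <= q ^ n) by (apply pow_R1_Rle; lra).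
  assert (E : layer n = layer 0 * q ^ n) by (unfold layer; simpl; ring).
  assert (H1 := overlap_gt1 T T_gt1).
  rewrite E; nra.
Qed.

Lemma layer_gt_overlap_ratio (n : nat) : (n < K)%nat -> 1 < layer n / overlap T.
Proof.
  intros Hn; assert (H := overlap_lt_layer n Hn); assert (H1 := overlap_gt1 T T_gt1).
  apply (Rlt_div_r 1); lra.
Qed.

Lemma layer_sectors_bounds (n : nat) : (n < K)%nat ->
  37 / 10 * sinh_ln (layer (S n)) / sinh_ln T <= INR (layer_sectors n)
    <= 37 / 10 * sinh_ln (layer (S n)) / sinh_ln T + 1 /\ (1 <= layer_sectors n)%nat.
Proof.
  intros Hn; apply ceil_bounds.
  assert (H := layer_gt_overlap_ratio n Hn).
  assert (Hs := sinh_ln_gt0 (layer (S n)) ltac:(rewrite layer_S; nra)).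
  assert (HT := sinh_ln_gt0 T T_gt1).
  apply Rdiv_lt_0_compat; lra.
Qed.

Lemma layer_sector_admissible (n j : nat) :
  (n < K)%nat -> admissible r1 (tanh_ln T) (layer_sector n j).
Proof.
  intros Hn; unfold layer_sector.
  destruct (layer_sectors_bounds n Hn) as [[Hm _] _].
  rewrite layer_S in *.
  exact (sector_admissible r1 T _ _ j r1_gt0 T_gt1 (layer_gt_overlap_ratio n Hn) Hm).
Qed.

Lemma radius_in_some_layer (s : R) :
  0 <= s -> ratio_radius T <= s -> s * (1 + eps) < 1 ->
  exists n, (n < K)%nat /\ ratio_radius (layer n / overlap T) < s < ratio_radius (layer (S n)).
Proof.
  intros Hs0 HTs Hs1.
  set (P := (1 + s) / (1 - s)).
  assert (HP : P * (1 - s) = 1 + s) by (unfold P; field; nra).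
  assert (HTP : T <= P).
  { apply (Rmult_le_reg_r (1 - s)); [nra |]; rewrite HP.
    apply Rnot_lt_le; intros H.
    apply (lt_ratio_radius T s) in H; lra. }
  assert (HPK : P < layer K).
  { rewrite layer_K; apply (Rmult_lt_reg_r (1 - s)); [nra |]; rewrite HP.
    replace ((1 + 2 / eps) * (1 - s)) with (1 + s + 2 / eps * (1 - s * (1 + eps)))
      by (field; lra).
    assert (0 < 2 / eps * (1 - s * (1 + eps)))
      by (apply Rmult_lt_0_compat; [apply Rdiv_lt_0_compat |]; lra).
    lra. }
  destruct (exists_step_between layer P K ltac:(lra) HPK) as (n & Hn & Hlo & Hhi).
  exists n; split; [exact Hn | split].
  - assert (Ha := layer_gt_overlap_ratio n Hn); assert (H := overlap_gt1 T T_gt1).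
    assert (HaP : layer n / overlap T < P) by (apply (Rlt_div_l (layer n)); nra).
    apply ratio_radius_lt; [lra |].
    apply (Rmult_lt_compat_r (1 - s)) in HaP; [lra | nra].
  - assert (Ha := layer_gt_overlap_ratio n Hn).
    apply lt_ratio_radius; [rewrite layer_S; nra |].
    apply (Rmult_lt_compat_r (1 - s)) in Hhi; [lra | nra].
Qed.

Lemma layers_cover (z : C) :
  r1 * ratio_radius T <= Cmod z -> Cmod z < r1 / (1 + eps) ->
  exists n j, (n < K)%nat /\ (j < layer_sectors n)%nat /\ layer_sector n j z.
Proof.
  intros Hout Hin.
  set (s := Cmod z / r1).
  assert (Hzs : Cmod z = r1 * s) by (unfold s; field; lra).
  rewrite Hzs in Hout, Hin.
  assert (Hs0 : 0 <= s) by (apply Rdiv_le_0_compat; [apply Cmod_ge_0 | lra]).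
  assert (Hs1 : s * (1 + eps) < 1).
  { apply (Rlt_div_r (r1 * s)) in Hin; [| lra].
    apply (Rmult_lt_reg_l r1); lra. }
  destruct (radius_in_some_layer s Hs0 ltac:(nra) Hs1) as (n & Hn & Hlo & Hhi).
  destruct (layer_sectors_bounds n Hn) as [_ Hm].
  destruct (sector_cover r1 (layer n / overlap T) (layer (S n)) (layer_sectors n) z r1_gt0
              (layer_gt_overlap_ratio n Hn) Hm) as (j & Hj & Hz).
  - rewrite Hzs; split; apply Rmult_lt_compat_l; assumption.
  - exists n, j; auto.
Qed.

Definition layer_constant : R := (37 / 20 * T / sinh_ln T + overlap T) / (T - overlap T).

Lemma layer_sectors_le (n : nat) : (n < K)%nat ->
  INR (layer_sectors n) <= layer_constant * (layer (S n) - layer n).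
Proof.
  intros Hn.
  destruct (layer_sectors_bounds n Hn) as [[_ Hm] _].
  assert (Hnu := overlap_gt1 T T_gt1); assert (HnuT := overlap_lt T T_gt1).
  assert (Hbeta := sinh_ln_gt0 T T_gt1).
  assert (HL := overlap_lt_layer n Hn).
  assert (HLS := layer_S n).
  set (L := layer n) in *.
  assert (HLnu : 0 < L / overlap T) by (apply Rdiv_lt_0_compat; lra).
  assert (Hsigma : sinh_ln (layer (S n)) <= T * (L / overlap T) / 2).
  { rewrite HLS; unfold sinh_ln.
    apply Rle_div_l; [nra |].
    replace (T * (L / overlap T) / 2 * (2 * (T * (L / overlap T))))
      with ((T * (L / overlap T)) ^ 2) by (field; lra).
    lra. }
  replace (layer_constant * (layer (S n) - L))
    with ((37 / 20 * T / sinh_ln T / overlap T + 1) * L)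
    by (rewrite HLS; unfold layer_constant; field; lra).
  assert (Hfirst : 37 / 10 * sinh_ln (layer (S n)) / sinh_ln T
                   <= 37 / 20 * T / sinh_ln T / overlap T * L).
  { replace (37 / 20 * T / sinh_ln T / overlap T * L)
      with (37 / 10 * (T * (L / overlap T) / 2) / sinh_ln T) by (field; lra).
    unfold Rdiv at 1 3; apply Rmult_le_compat_r; [left; apply Rinv_0_lt_compat; lra |].
    apply Rmult_le_compat_l; lra. }
  assert (0 <= 37 / 20 * T / sinh_ln T / overlap T)
    by (apply Rdiv_le_0_compat; [apply Rdiv_le_0_compat |]; lra).
  nra.
Qed.

Lemma layers_count : INR (prefix_sum layer_sectors K) < 5 / (tanh_ln T ^ 2 * eps).
Proof.
  assert (Htanh : 0 < tanh_ln T) by (unfold tanh_ln; apply Rdiv_lt_0_compat; nra).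
  assert (Hbound : 0 < 5 / (tanh_ln T ^ 2 * eps))
    by (apply Rdiv_lt_0_compat; [lra | apply Rmult_lt_0_compat; nra]).
  destruct (Nat.eq_dec K 0) as [HK | HK]; [rewrite HK; exact Hbound |].
  assert (Hsum := prefix_sum_le_telescope layer_sectors layer layer_constant K layer_sectors_le).
  rewrite layer_K in Hsum.
  assert (H0 := overlap_lt_layer0 ltac:(lia)); assert (Hnu := overlap_gt1 T T_gt1).
  assert (HnuT := overlap_lt T T_gt1); assert (Hbeta := sinh_ln_gt0 T T_gt1).
  assert (Hc : 0 < layer_constant).
  { unfold layer_constant; apply Rdiv_lt_0_compat; [| lra].
    assert (0 < 37 / 20 * T / sinh_ln T) by (apply Rdiv_lt_0_compat; lra); lra. }
  assert (Hca : layer_constant * tanh_ln T ^ 2 <= 5 / 2).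
  { unfold layer_constant.
    replace ((37 / 20 * T / sinh_ln T + overlap T) / (T - overlap T) * tanh_ln T ^ 2)
      with ((37 / 20 * T / sinh_ln T + overlap T) * tanh_ln T ^ 2 / (T - overlap T))
      by (field; lra).
    apply Rle_div_l; [lra |]; exact (layer_constant_bound T T_gt1). }
  apply Rle_lt_trans with (1 := Hsum), Rlt_le_trans with (layer_constant * (2 / eps)).
  - apply Rmult_lt_compat_l; lra.
  - replace (layer_constant * (2 / eps))
      with (2 * (layer_constant * tanh_ln T ^ 2) / (tanh_ln T ^ 2 * eps)) by (field; nra).
    assert (0 < tanh_ln T ^ 2 * eps) by (apply Rmult_lt_0_compat; [apply pow_lt |]; lra).
    unfold Rdiv; apply Rmult_le_compat_r; [left; apply Rinv_0_lt_compat |]; lra.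
Qed.

End Layers.

Lemma layering_exists (eps T : R) :
  0 < eps -> 1 < T ->
  exists K, layer eps T K 0 <= T /\ ((0 < K)%nat -> overlap T < layer eps T K 0).
Proof.
  intros Heps HT.
  assert (Hq := layer_ratio_gt1 T HT); assert (Hnu := overlap_gt1 T HT).
  destruct (exists_geometric_start (1 + 2 / eps) (T / overlap T) T Hq ltac:(lra)
              ltac:(assert (0 < 2 / eps) by (apply Rdiv_lt_0_compat; lra); lra))
    as (K & HK0 & HK1).
  exists K; unfold layer; simpl; rewrite Rmult_1_r; split; [exact HK0 |].
  assert (E : T / (T / overlap T) = overlap T) by (field; lra).
  rewrite E in HK1; exact HK1.
Qed.

Lemma exists_admissible_cover (eps r1 T : R) (N : nat) :
  0 < eps -> 0 < r1 -> 1 < T -> 5 / (tanh_ln T ^ 2 * eps) < INR N ->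
  exists W : nat -> C -> Prop,
    (forall i, (i < N)%nat -> admissible r1 (tanh_ln T) (W i)) /\
    (forall z, Cmod z < r1 / (1 + eps) -> exists i, (i < N)%nat /\ W i z).
Proof.
  intros Heps Hr1 HT HN.
  destruct (layering_exists eps T Heps HT) as (K & HK0 & HK1).
  set (central := disk (r1 * ratio_radius T)).
  set (m := layer_sectors eps T K).
  set (F := layer_sector eps r1 T K).
  exists (fun i => match i with O => central | S i => block_enum central F m K i end).
  split.
  - intros [| i] Hi; [exact (central_admissible r1 T Hr1 HT) |].
    destruct (block_enum_cases central F m K i) as [-> | (n & j & Hn & _ & ->)].
    + exact (central_admissible r1 T Hr1 HT).
    + exact (layer_sector_admissible eps r1 T K Heps Hr1 HT HK1 n j Hn).
  - assert (Hcount := layers_count eps T K Heps HT HK0 HK1); fold m in Hcount.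
    assert (HK : (prefix_sum m K < N)%nat) by (apply INR_lt; lra).
    intros z Hz.
    destruct (Rlt_le_dec (Cmod z) (r1 * ratio_radius T)) as [Hc | Hc].
    + exists 0%nat; split; [lia | exact Hc].
    + destruct (layers_cover eps r1 T K Heps Hr1 HT HK0 HK1 z Hc Hz) as (n & j & Hn & Hj & Hzs).
      exists (S (prefix_sum m n + j)); split.
      * assert (H := prefix_sum_block_lt m K n j Hn Hj); lia.
      * rewrite block_enum_prefix_sum; assumption.
Qed.

Lemma tanh_ln_onto (alpha : R) : 0 < alpha < 1 -> exists T, 1 < T /\ tanh_ln T = alpha.
Proof.
  intros Halpha.
  assert (Hq : 1 < (1 + alpha) / (1 - alpha)) by (apply (Rlt_div_r 1); lra).
  exists (sqrt ((1 + alpha) / (1 - alpha))).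
  assert (HT2 : sqrt ((1 + alpha) / (1 - alpha)) ^ 2 = (1 + alpha) / (1 - alpha))
    by (rewrite <- Rsqr_pow2; apply Rsqr_sqrt; lra).
  split.
  - assert (H := sqrt_lt_1 1 ((1 + alpha) / (1 - alpha)) ltac:(lra) ltac:(lra) Hq).
    rewrite sqrt_1 in H; exact H.
  - unfold tanh_ln; rewrite HT2; field; lra.
Qed.

Theorem mainTheorem12 (eps r alpha : R) (N : nat) :
  0 < eps -> 0 < r -> 0 < alpha -> alpha < 1 ->
  INR N > 5 / (alpha ^ 2 * eps) ->
  let r1 := (1 + eps) * r in
  exists W : nat -> C -> Prop,
    (forall i, (i < N)%nat ->
       open (W i) /\ (forall z, W i z -> disk r1 z) /\
       Rbar_le (diam_r r1 (W i)) (Finite alpha)) /\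
    (forall z, disk r z -> exists i, (i < N)%nat /\ W i z).
Proof.
  intros Heps Hr Halpha0 Halpha1 HN r1.
  destruct (tanh_ln_onto alpha (conj Halpha0 Halpha1)) as (T & HT & <-).
  destruct (exists_admissible_cover eps r1 T N Heps ltac:(unfold r1; nra) HT HN)
    as (W & Hadm & Hcover).
  exists W; split; [exact Hadm |].
  intros z Hz; apply Hcover.
  replace (r1 / (1 + eps)) with r by (unfold r1; field; lra); exact Hz.
Qed.
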